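(* Let $(a_n(q))_{n\ge1}$ be a sequence in $\mathbb{Z}[q]$ and $N\ge1$. Suppose that $\prod_{d\mid N,\,\mu(d)=1}a_{N/d}(q^d)\equiv\prod_{d\mid N,\,\mu(d)=-1}a_{N/d}(q^d)\pmod{[N]_q}$ and that $\sum_{d\mid n}\mu(d)a_{n/d}(q^d)\equiv0\pmod{[n]_q}$ for all $1\le n<N$. Then $[N]_q$ divides $\left(\sum_{d\mid N}\mu(d)\,a_{N/d}(q^d)\right)\cdot\prod_{d\mid N,\ d>1,\ \mu(d)=1}a_{N/d}(q^d)$ in $\mathbb{Z}[q]$.
   Context: $\mu$ is the Möbius function and $[n]_q=1+q+\dots+q^{n-1}$; polynomial congruences modulo $[n]_q$ mean divisibility of the difference by $[n]_q$ in $\mathbb{Z}[q]$. *)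

From mathcomp Require Import all_boot all_order all_algebra.
Set Implicit Arguments. Unset Strict Implicit. Unset Printing Implicit Defensive.
Import GRing.Theory.
Local Open Scope ring_scope.

Definition mobius (n : nat) : int :=
  if [forall p : 'I_n.+1, (prime p) ==> ~~ (p * p %| n)%N]
  then (-1) ^+ size (primes n) else 0.

Definition qint (n : nat) : {poly int} := \sum_(i < n) 'X^i.

Definition subst_pow (p : {poly int}) (d : nat) : {poly int} := p \Po 'X^d.

Definition zdvd (p r : {poly int}) : Prop := exists c : {poly int}, r = c * p.

(* Since [N]_q is monic and its roots, the nontrivial N-th roots of unity, are
   simple, it suffices that the product vanishes at each such root z.  Let p be
   a prime dividing the order of z and put B d = a_(N/d)(z^d).  For a divisor
   e > 1 of N prime to p, z^e is a nontrivial (N/e)-th root of unity, so the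
   hypothesis for n = N/e says that sum_(g | N/e) mu(g) B(e g) = 0; by induction
   on N/e this forces B(d p) = B(d) for every divisor d > 1 of N prime to p.
   Hence the Moebius sum at z collapses to B(1) - B(p), and the involution
   d <-> d p^(+-1) on squarefree divisors matches the factors of the two
   products of the congruence, except B(1) against B(p): their difference at z,
   which vanishes, is the Moebius sum times the product over d > 1, mu(d) = 1. *)

From mathcomp Require Import all_boot all_order all_algebra all_field.
Set Implicit Arguments. Unset Strict Implicit. Unset Printing Implicit Defensive.
Import GRing.Theory.
Local Open Scope ring_scope.

Lemma sqfreeP n : (0 < n)%N ->
  reflect (forall q, prime q -> ~~ (q * q %| n)%N)
          [forall q : 'I_n.+1, prime q ==> ~~ (q * q %| n)%N].
Proof.
move=> n0; apply: (iffP forallP) => [sqf q q_pr | sqf q]; last by apply/implyP/sqf.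
apply/negP => qqn; have qn : (q < n.+1)%N.
  by rewrite ltnS (leq_trans _ (dvdn_leq n0 qqn)) // leq_pmulr // prime_gt0.
by move: (sqf (Ordinal qn)); rewrite /= q_pr qqn.
Qed.

Lemma mobius_sqr_dvd n p : prime p -> (0 < n)%N -> (p * p %| n)%N -> mobius n = 0.
Proof.
move=> p_pr n0 ppn; rewrite /mobius; case: sqfreeP => // sqf.
by move: (sqf p p_pr); rewrite ppn.
Qed.

Lemma mobiusM_prime n p : prime p -> (0 < n)%N -> ~~ (p %| n)%N ->
  mobius (n * p) = - mobius n.
Proof.
move=> p_pr n0 pn; have np0 : (0 < n * p)%N by rewrite muln_gt0 n0 prime_gt0.
have coprime_q q : prime q -> q != p -> coprime (q * q) p.
  by move=> q_pr qp; rewrite coprimeMl andbb prime_coprime // dvdn_prime2.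
have sqf_np : [forall q : 'I_(n * p).+1, prime q ==> ~~ (q * q %| n * p)%N]
            = [forall q : 'I_n.+1, prime q ==> ~~ (q * q %| n)%N].
  apply/sqfreeP/sqfreeP => // sqf q q_pr; have [-> | qp] := eqVneq q p.
  - by apply: contra pn => /(dvdn_trans (dvdn_mulr p (dvdnn p))).
  - by rewrite -(Gauss_dvdl _ (coprime_q q q_pr qp)) sqf.
  - by rewrite dvdn_pmul2r ?prime_gt0.
  - by rewrite Gauss_dvdl ?coprime_q ?sqf.
have primes_np : perm_eq (primes (n * p)) (p :: primes n).
  apply: uniq_perm; rewrite /= ?primes_uniq ?mem_primes ?p_pr ?n0 ?(negbTE pn) //.
  move=> q; rewrite in_cons !mem_primes np0 n0 /=; have [-> | qp] := eqVneq q p.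
    by rewrite p_pr dvdn_mull.
  case q_pr: (prime q) => //=.
  by rewrite Euclid_dvdM // (dvdn_prime2 q_pr p_pr) (negbTE qp) orbF.
rewrite /mobius sqf_np (perm_size primes_np) /=.
by case: ifP; rewrite ?oppr0 // exprS mulN1r.
Qed.

Lemma mobius1 : mobius 1 = 1.
Proof.
rewrite /mobius; case: sqfreeP => // sqf; exfalso; apply: sqf => q q_pr.
by rewrite dvdn1 muln_eq1 andbb; case: eqP q_pr => // ->.
Qed.

Lemma mobius_prime p : prime p -> mobius p = -1.
Proof.
by move=> p_pr; rewrite -(mul1n p) mobiusM_prime ?mobius1 // dvdn1 gtn_eqF ?prime_gt1.
Qed.

Lemma perm_divisors_prime n p : prime p -> (0 < n)%N -> (p %| n)%N ->
  perm_eq (divisors n)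
    ([seq h <- divisors n | ~~ (p %| h)%N] ++ [seq (h * p)%N | h <- divisors (n %/ p)]).
Proof.
move=> p_pr n0 pn; have p0 := prime_gt0 p_pr.
have np0 : (0 < n %/ p)%N by rewrite divn_gt0 // dvdn_leq.
apply: uniq_perm; rewrite ?divisors_uniq // ?cat_uniq ?filter_uniq ?divisors_uniq //=.
  rewrite map_inj_in_uniq ?divisors_uniq ?andbT => [|x y _ _ /eqP]; last first.
    by rewrite eqn_pmul2r // => /eqP.
  by apply/hasPn => _ /mapP[h _ ->]; rewrite mem_filter dvdn_mull.
move=> g; rewrite mem_cat mem_filter -(dvdn_divisors g n0).
case pg: (p %| g)%N => /=; last first.
  case: mapP => [[h _ gh] | _]; last by rewrite orbF.
  by move: pg; rewrite gh dvdn_mull.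
apply/idP/mapP => [gn | [h hnp ->]].
  by exists (g %/ p)%N; rewrite ?divnK // -dvdn_divisors // dvdn_divRL // divnK.
by move: hnp; rewrite -dvdn_divisors // dvdn_divRL.
Qed.

Lemma perm_divisors_div_coprime n p : prime p -> (0 < n)%N -> (p %| n)%N ->
  perm_eq [seq h <- divisors (n %/ p) | ~~ (p %| h)%N] [seq h <- divisors n | ~~ (p %| h)%N].
Proof.
move=> p_pr n0 pn; have np0 : (0 < n %/ p)%N by rewrite divn_gt0 ?prime_gt0 // dvdn_leq.
apply: uniq_perm; rewrite ?filter_uniq ?divisors_uniq // => h.
rewrite !mem_filter -!dvdn_divisors //; case ph: (p %| h)%N => //=.
by rewrite dvdn_divRL // Gauss_dvd ?pn ?andbT // coprime_sym prime_coprime ?ph.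
Qed.

Lemma sum_mobius_split (R : pzRingType) n p (F : nat -> R) :
  prime p -> (0 < n)%N -> (p %| n)%N ->
  \sum_(g <- divisors n) (mobius g)%:~R * F g
  = \sum_(h <- divisors n | ~~ (p %| h)%N) (mobius h)%:~R * (F h - F (h * p)%N).
Proof.
move=> p_pr n0 pn; have p0 := prime_gt0 p_pr.
have np0 : (0 < n %/ p)%N by rewrite divn_gt0 // dvdn_leq.
rewrite (perm_big _ (perm_divisors_prime p_pr n0 pn)) big_cat /= big_filter big_map.
have mobius_mulp h : (h %| n %/ p)%N ->
    (mobius (h * p))%:~R * F (h * p)%N
    = if ~~ (p %| h)%N then - ((mobius h)%:~R * F (h * p)%N) else 0.
  move=> hnp; have h0 : (0 < h)%N := dvdn_gt0 np0 hnp.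
  case: ifP => ph; first by rewrite mobiusM_prime // mulrNz mulNr.
  by rewrite (@mobius_sqr_dvd _ p) ?mul0r ?muln_gt0 ?h0 // dvdn_pmul2r // (negbFE ph).
rewrite [X in _ + X](eq_big_seq (fun h =>
    if ~~ (p %| h)%N then - ((mobius h)%:~R * F (h * p)%N) else 0)); last first.
  by move=> h; rewrite -dvdn_divisors // => /mobius_mulp.
rewrite -big_mkcond -[X in _ + X]big_filter (perm_big _ (perm_divisors_div_coprime p_pr n0 pn)).
by rewrite big_filter -big_split; apply: eq_bigr => h _; rewrite mulrBr.
Qed.

Lemma sum_mobius_pinvariant (R : pzRingType) n p (F : nat -> R) :
  prime p -> (0 < n)%N -> (p %| n)%N ->
  (forall h, (h %| n)%N -> (1 < h)%N -> ~~ (p %| h)%N -> F (h * p)%N = F h) ->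
  \sum_(g <- divisors n) (mobius g)%:~R * F g = F 1%N - F p.
Proof.
move=> p_pr n0 pn Fp; rewrite (sum_mobius_split _ p_pr n0 pn) big_mkcond.
rewrite (bigD1_seq 1) ?divisor1 ?divisors_uniq //= big1_seq => [|h /andP[h1 hn]].
  by rewrite dvdn1 gtn_eqF ?prime_gt1 //= mobius1 mul1r mul1n addr0.
rewrite -dvdn_divisors // in hn; have h0 : (0 < h)%N := dvdn_gt0 n0 hn.
by case: ifP => // ph; rewrite Fp ?subrr ?mulr0 // ltn_neqAle eq_sym h1.
Qed.

Lemma prod_mobius1_split (R : comPzRingType) n (G : nat -> R) : (0 < n)%N ->
  \prod_(d <- divisors n | mobius d == 1) G d
  = G 1%N * \prod_(d <- divisors n | (1 < d)%N && (mobius d == 1)) G d.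
Proof.
move=> n0; rewrite big_mkcond (bigD1_seq 1) ?divisor1 ?divisors_uniq //= mobius1 eqxx.
congr (_ * _); rewrite [LHS]big_mkcond [RHS]big_mkcond; apply: eq_big_seq => d.
rewrite -dvdn_divisors // => /(dvdn_gt0 n0) d0.
by rewrite ltn_neqAle d0 andbT [1 == d]eq_sym; case: (d == 1%N).
Qed.

Definition toggle p d := if (p %| d)%N then (d %/ p)%N else (d * p)%N.

Section Toggle.

Variable p : nat.
Hypothesis p_prime : prime p.

Lemma ndvdn_div_mobius_neq0 d : (0 < d)%N -> (p %| d)%N -> mobius d != 0 ->
  ~~ (p %| d %/ p)%N.
Proof.
move=> d0 pd; apply: contraNN => pdp; apply/eqP/(mobius_sqr_dvd p_prime d0).
by rewrite -(divnK pd) dvdn_pmul2r ?prime_gt0.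
Qed.

Lemma toggle_dvd N d : (p %| N)%N -> (d %| N)%N -> (toggle p d %| N)%N.
Proof.
move=> pN dN; rewrite /toggle; case: ifP => pd; first exact: dvdn_trans (dvdn_div pd) dN.
by rewrite Gauss_dvd ?dN ?pN // coprime_sym prime_coprime ?pd.
Qed.

Section Squarefree.

Variable d : nat.
Hypotheses (d_gt0 : (0 < d)%N) (mobius_d : mobius d != 0).

Lemma toggleK : toggle p (toggle p d) = d.
Proof.
rewrite /toggle; case pd: (p %| d)%N; last by rewrite dvdn_mull // mulnK ?prime_gt0.
by rewrite (negbTE (ndvdn_div_mobius_neq0 d_gt0 pd mobius_d)) divnK.
Qed.

Lemma mobius_toggle : mobius (toggle p d) = - mobius d.
Proof.
rewrite /toggle; case: ifP => pd; last by rewrite mobiusM_prime ?pd.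
have dp0 : (0 < d %/ p)%N by rewrite divn_gt0 ?prime_gt0 // dvdn_leq.
by rewrite -{2}(divnK pd) mobiusM_prime ?opprK ?ndvdn_div_mobius_neq0.
Qed.

End Squarefree.

Lemma prod_mobiusN1_toggle (R : comPzRingType) N (G : nat -> R) :
  (0 < N)%N -> (p %| N)%N ->
  \prod_(d <- divisors N | mobius d == -1) G d
  = \prod_(d <- divisors N | mobius d == 1) G (toggle p d).
Proof.
move=> N0 pN; pose divs_mobius k := [seq d <- divisors N | mobius d == k].
have mem_divs k d : (d \in divs_mobius k) = (d %| N)%N && (mobius d == k).
  by rewrite mem_filter -dvdn_divisors // andbC.
have sqf_divs k d : k != 0 -> d \in divs_mobius k -> (0 < d)%N /\ mobius d != 0.
  by move=> k0; rewrite mem_divs => /andP[/(dvdn_gt0 N0) d0 /eqP->].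
have perm_toggle : perm_eq (divs_mobius (-1)) [seq toggle p d | d <- divs_mobius 1].
  apply: uniq_perm; rewrite ?filter_uniq ?divisors_uniq //.
    rewrite map_inj_in_uniq ?filter_uniq ?divisors_uniq // => x y.
    move=> /(sqf_divs _ _ (oner_neq0 _))[x0 mx] /(sqf_divs _ _ (oner_neq0 _))[y0 my] Exy.
    by rewrite -(toggleK x0 mx) Exy toggleK.
  move=> x; apply/idP/mapP => [x_divs | [d d_divs ->]].
    have [x0 mx] := sqf_divs _ _ (isT : -1 != 0 :> int) x_divs.
    exists (toggle p x); last by rewrite toggleK.
    move: x_divs; rewrite !mem_divs mobius_toggle // => /andP[xN /eqP->].
    by rewrite toggle_dvd.
  have [d0 md] := sqf_divs _ _ (oner_neq0 _) d_divs.
  move: d_divs; rewrite !mem_divs mobius_toggle // => /andP[dN /eqP->].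
  by rewrite toggle_dvd.
by rewrite -big_filter (perm_big _ perm_toggle) big_map big_filter.
Qed.

End Toggle.

Section PrimeInvariance.

Variables (R : comPzRingType) (N p : nat) (B : nat -> R).
Hypotheses (N_gt0 : (0 < N)%N) (p_prime : prime p) (p_dvdN : (p %| N)%N).
Hypothesis sum_mobius_B_eq0 : forall e, (e %| N)%N -> (1 < e)%N -> ~~ (p %| e)%N ->
  \sum_(g <- divisors (N %/ e)) (mobius g)%:~R * B (e * g)%N = 0.

Lemma B_mul_prime d : (d %| N)%N -> (1 < d)%N -> ~~ (p %| d)%N -> B (d * p)%N = B d.
Proof.
have [k] := ubnP (N %/ d); elim: k d => // k IH d Nd_lt dN d1 pd.
have d0 : (0 < d)%N by apply: ltnW.
have Nd0 : (0 < N %/ d)%N by rewrite divn_gt0 // dvdn_leq.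
have p_dvd_Nd : (p %| N %/ d)%N.
  by rewrite dvdn_divRL // Gauss_dvd ?p_dvdN ?dN // prime_coprime.
apply/esym/eqP; rewrite -subr_eq0 -(sum_mobius_B_eq0 dN d1 pd).
rewrite (sum_mobius_pinvariant (F := fun g => B (d * g)%N) p_prime Nd0 p_dvd_Nd) ?muln1 //.
move=> h hNd h1 ph; have h0 : (0 < h)%N by apply: ltnW.
have dhN : (d * h %| N)%N by rewrite mulnC -dvdn_divRL.
rewrite mulnA IH // ?Euclid_dvdM // ?negb_or ?pd ?ph //.
- by rewrite divnMA (leq_trans (ltn_Pdiv h1 Nd0)) // -ltnS.
- by rewrite (leq_trans d1) // leq_pmulr.
Qed.

Lemma sum_mobius_B : \sum_(d <- divisors N) (mobius d)%:~R * B d = B 1%N - B p.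
Proof. exact: sum_mobius_pinvariant p_prime N_gt0 p_dvdN B_mul_prime. Qed.

Lemma B_toggle d : (d %| N)%N -> (1 < d)%N -> mobius d = 1 -> B (toggle p d) = B d.
Proof.
move=> dN d1 mobius_d; have d0 : (0 < d)%N by apply: ltnW.
rewrite /toggle; case: ifP => pd; last by rewrite B_mul_prime ?pd.
have pdp : ~~ (p %| d %/ p)%N by rewrite ndvdn_div_mobius_neq0 ?mobius_d.
have dp1 : (1 < d %/ p)%N.
  rewrite ltn_neqAle divn_gt0 ?prime_gt0 // dvdn_leq // andbT.
  by apply: contra_eqN mobius_d => /eqP dp1; rewrite -(divnK pd) -dp1 mul1n mobius_prime.
by rewrite -{2}(divnK pd) B_mul_prime // (dvdn_trans (dvdn_div pd) dN).
Qed.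

Lemma prod_mobius_B_sub :
  \prod_(d <- divisors N | mobius d == 1) B d - \prod_(d <- divisors N | mobius d == -1) B d
  = (\sum_(d <- divisors N) (mobius d)%:~R * B d)
    * \prod_(d <- divisors N | (1 < d)%N && (mobius d == 1)) B d.
Proof.
rewrite (prod_mobiusN1_toggle p_prime) // !prod_mobius1_split // sum_mobius_B mulrBl.
rewrite [toggle p 1]/toggle dvdn1 gtn_eqF ?prime_gt1 // mul1n; congr (_ - _ * _).
rewrite big_seq_cond [RHS]big_seq_cond.
apply: eq_bigr => d /andP[dN /andP[d1 /eqP mobius_d]].
by rewrite B_toggle // dvdn_divisors.
Qed.

End PrimeInvariance.

Definition evalC (z : algC) : {rmorphism {poly int} -> algC} :=
  horner_morph (fun c : int => mulrC z c%:~R).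

Lemma evalCE z p : evalC z p = (map_poly intr p).[z].
Proof. by []. Qed.

Lemma evalC_subst_pow z p d : evalC z (subst_pow p d) = evalC (z ^+ d) p.
Proof. by rewrite !evalCE /subst_pow map_comp_poly horner_comp map_polyXn hornerXn. Qed.

Lemma evalC_qint z n : z ^+ n = 1 -> z != 1 -> evalC z (qint n) = 0.
Proof.
move=> zn z1; have /eqP := subrX1 z n.
rewrite zn subrr eq_sym mulf_eq0 subr_eq0 (negbTE z1) /= => /eqP <-.
by rewrite /qint rmorph_sum; apply: eq_bigr => i _; rewrite evalCE map_polyXn hornerXn.
Qed.

Lemma evalC_qint_dvd z n R : zdvd (qint n) R -> z ^+ n = 1 -> z != 1 -> evalC z R = 0.
Proof. by move=> [c ->] zn z1; rewrite rmorphM evalC_qint ?mulr0. Qed.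

Lemma monic_dvd_of_roots (Q R : {poly int}) (rs : seq algC) :
    Q \is monic -> uniq rs -> ((size Q).-1 <= size rs)%N ->
    all (root (map_poly intr Q)) rs -> all (root (map_poly intr R)) rs -> zdvd Q R.
Proof.
move=> monQ rs_uniq rs_size rootsQ rootsR.
move: (Pdiv.IdomainMonic.divp_eq monQ R); set q := R %/ Q; set r := R %% Q => E.
suff r0 : r = 0 by exists q; rewrite E r0 addr0.
have rootsr : all (root (map_poly intr r)) rs.
  apply/allP => x xrs; move/allP/(_ x xrs): rootsR; move/allP/(_ x xrs): rootsQ.
  by rewrite /root E rmorphD rmorphM !hornerE => /eqP->; rewrite mulr0 add0r.
apply: (map_inj_poly (@intr_inj _) (rmorph0 _)); rewrite map_poly0.
apply: roots_geq_poly_eq0 rootsr rs_uniq _.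
rewrite (size_map_inj_poly (@intr_inj _) (rmorph0 _)).
have Q0 := monic_neq0 monQ.
by apply: leq_trans rs_size; rewrite -ltnS prednK ?ltn_modpN0 ?size_poly_gt0.
Qed.

Lemma qint_poly n : qint n = \poly_(i < n) 1.
Proof. by rewrite poly_def; apply: eq_bigr => i _; rewrite scale1r. Qed.

Lemma size_qint n : size (qint n) = n.
Proof. by case: n => [|n]; rewrite qint_poly ?size_poly0 ?size_poly_eq ?oner_neq0. Qed.

Lemma qint_monic n : (0 < n)%N -> qint n \is monic.
Proof. by move=> n0; rewrite qint_poly monicE lead_coef_poly ?oner_neq0. Qed.

Lemma qint_dvd_of_roots N R : (0 < N)%N ->
  (forall z, z ^+ N = 1 -> z != 1 -> evalC z R = 0) -> zdvd (qint N) R.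
Proof.
move=> N0 rootsR; have [w w_prim] := C_prim_root_exists N0.
have w_neq1 i : (0 < i < N)%N -> w ^+ i != 1.
  by case/andP=> i0 iN; rewrite -(expr0 w) (eq_prim_root_expr w_prim) !modn_small // -lt0n.
have w_root i : (w ^+ i) ^+ N = 1 by rewrite exprAC (prim_expr_order w_prim) expr1n.
pose rs := [seq w ^+ i | i <- iota 1 N.-1].
have in_rs x : x \in rs -> x ^+ N = 1 /\ x != 1.
  case/mapP=> i; rewrite mem_iota add1n prednK // => i_range ->.
  by split; [exact: w_root | exact: w_neq1].
apply: (monic_dvd_of_roots (rs := rs) (qint_monic N0)).
- rewrite map_inj_in_uniq ?iota_uniq // => i j.
  rewrite !mem_iota add1n prednK // => /andP[_ iN] /andP[_ jN] /eqP.
  by rewrite (eq_prim_root_expr w_prim) !modn_small // => /eqP.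
- by rewrite size_qint size_map size_iota.
- by apply/allP => x /in_rs[xN x1]; apply/eqP/evalC_qint.
- by apply/allP => x /in_rs[xN x1]; apply/eqP/rootsR.
Qed.

Lemma exists_prime_dvd_order (R : nzRingType) (z : R) n :
  (0 < n)%N -> z ^+ n = 1 -> z != 1 -> {p | prime p & forall e, z ^+ e = 1 -> (p %| e)%N}.
Proof.
move=> n0 zn z1; have [m m_prim _] := prim_order_exists n0 zn.
have m1 : (1 < m)%N.
  rewrite ltn_neqAle (prim_order_gt0 m_prim) andbT; apply: contraNneq z1 => m_eq1.
  by rewrite -(prim_expr_order m_prim) -m_eq1.
exists (pdiv m); first exact: pdiv_prime.
by move=> e ze; rewrite (dvdn_trans (pdiv_dvd m)) // (prim_order_dvd m_prim) ze.
Qed.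

Theorem lemma3 (a : nat -> {poly int}) (N : nat) (HN : (1 <= N)%N)
  (Hcong : zdvd (qint N)
     (\prod_(d <- divisors N | mobius d == 1) subst_pow (a (N %/ d)%N) d
      - \prod_(d <- divisors N | mobius d == -1) subst_pow (a (N %/ d)%N) d))
  (Hprev : forall n : nat, (1 <= n)%N -> (n < N)%N ->
     zdvd (qint n) (\sum_(d <- divisors n) (mobius d)%:~R * subst_pow (a (n %/ d)%N) d)) :
  zdvd (qint N)
    ((\sum_(d <- divisors N) (mobius d)%:~R * subst_pow (a (N %/ d)%N) d)
    * \prod_(d <- divisors N | (1 < d)%N && (mobius d == 1))
        subst_pow (a (N %/ d)%N) d).
Proof.
apply: qint_dvd_of_roots => // z zN z1.
have [p p_prime p_dvd_exp] := exists_prime_dvd_order HN zN z1.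
pose B k := evalC (z ^+ k) (a (N %/ k)%N).
have B_sum0 e : (e %| N)%N -> (1 < e)%N -> ~~ (p %| e)%N ->
    \sum_(g <- divisors (N %/ e)) (mobius g)%:~R * B (e * g)%N = 0.
  move=> eN e1 pe; have e0 : (0 < e)%N by apply: ltnW.
  have Ne1 : (1 <= N %/ e)%N by rewrite divn_gt0 // dvdn_leq.
  have NeN : (N %/ e < N)%N by rewrite ltn_Pdiv.
  have ze_root : (z ^+ e) ^+ (N %/ e) = 1 by rewrite -exprM mulnC divnK.
  have ze_neq1 : z ^+ e != 1 by apply: contra pe => /eqP /p_dvd_exp.
  rewrite -[RHS](evalC_qint_dvd (Hprev _ Ne1 NeN) ze_root ze_neq1) rmorph_sum.
  by apply: eq_bigr => g _; rewrite rmorphM rmorph_int evalC_subst_pow /B -exprM divnMA.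
have p_dvdN : (p %| N)%N by apply: p_dvd_exp.
have evalC_term d : evalC z (subst_pow (a (N %/ d)%N) d) = B d := evalC_subst_pow _ _ _.
rewrite -[RHS](evalC_qint_dvd Hcong zN z1) rmorphB rmorphM !rmorph_prod rmorph_sum.
rewrite [X in X * _ = _](eq_bigr (fun d => (mobius d)%:~R * B d)) => [|d _]; last first.
  by rewrite rmorphM rmorph_int evalC_term.
rewrite !(eq_bigr B (fun d _ => evalC_term d)).
exact/esym/(prod_mobius_B_sub HN p_prime p_dvdN B_sum0).
Qed.
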